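(* Let $t$ and $m$ be positive integers. Then there exist a constant $c>0$ and $X_0$ (depending on $m,t$) such that for all $X\ge X_0$, \[ \#\left\{ n\leq X : p_{mt,t}(n)\equiv 0\pmod{2} \right\} \geq c\sqrt{X/3}, \] i.e. $\#\{ n\leq X : p_{mt,t}(n)\equiv 0\pmod{2}\} \gg \sqrt{X/3}$ for large $X$.
   Context: A partition $\lambda$ of a non-negative integer $n$ is a non-increasing sequence of positive integers (its parts) summing to $n$. For positive integers $A$ and $a$, $\mathrm{mex}_{A,a}(\lambda)$ denotes the smallest positive integer congruent to $a$ modulo $A$ that is not a part of $\lambda$. Then $p_{A,a}(n)$ denotes the number of partitions $\lambda$ of $n$ satisfying $\mathrm{mex}_{A,a}(\lambda)\equiv a \pmod{2A}$. Here $n$ ranges over positive integers. *)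

From mathcomp Require Import all_boot.
From Stdlib Require Import Reals ZArith.

Set Implicit Arguments.
Unset Strict Implicit.
Unset Printing Implicit Defensive.

Definition is_partition (n : nat) (s : seq nat) : bool :=
  [&& sorted geq s, all (fun x => 0 < x) s & sumn s == n].

Fixpoint seqs_of_len (k : nat) (vals : seq nat) : seq (seq nat) :=
  match k with
  | 0 => [:: [::]]
  | k'.+1 => [seq x :: s | x <- vals, s <- seqs_of_len k' vals]
  end.

(* Candidate sequences: length <= n, entries in {1,..,n}; every partition
   of n occurs exactly once among them. *)
Definition candidates (n : nat) : seq (seq nat) :=
  flatten [seq seqs_of_len k (iota 1 n) | k <- iota 0 n.+1].

Definition partitions (n : nat) : seq (seq nat) :=
  [seq s <- candidates n | is_partition n s].

Definition is_mex (A a : nat) (s : seq nat) (k : nat) : bool :=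
  [&& 0 < k, k == a %[mod A], k \notin s &
      all (fun j => (j == a %[mod A]) ==> (j \in s)) (iota 1 k.-1)].

(* mex_{A,a}(s) == a (mod 2A).  For a > 0, A > 0 the mex is at most
   a + A * sumn s, so searching k in {1,..,a + A * sumn s} finds it. *)
Definition mex_cond (A a : nat) (s : seq nat) : bool :=
  has (fun k => is_mex A a s k && (k == a %[mod 2 * A])) (iota 1 (a + A * sumn s)).

Definition p_mex (A a n : nat) : nat := count (mex_cond A a) (partitions n).

Definition even_count (A a : nat) (X : R) : nat :=
  count (fun n => ~~ odd (p_mex A a n)) (iota 1 (Z.to_nat (Int_part X))).

(* Let e_j = a + (a + A) + ... + (a + (j - 1) A).  The mex_{A,a} of a partition
   is a + J A, where J is the length of the initial run a, a + A, a + 2A, ...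
   among its parts, so p_{A,a}(n) counts the partitions of n with J even.  A
   partition contains the first j terms of the run for exactly J + 1 values of
   j, and J + 1 is odd iff J is even; hence p_{A,a}(n) = sum_j p(n - e_j)
   (mod 2).  Multiplying by Euler's product prod_i (1 - q^i), whose series is
   the pentagonal series (Shanks' finite form of the pentagonal number
   theorem), gives modulo 2
       sum_{g <= N generalized pentagonal} p_{A,a}(N - g) = [N is some e_j].
   For a positive proportion of N <= X the number of pentagonal g <= N is odd,
   and only O(sqrt X) of them are some e_j; for every other such N some
   p_{A,a}(N - g) is even.  As there are only O(sqrt X) pentagonal numbers
   below X, about sqrt X / 24 or more values n <= X have p_{A,a}(n) even. *)

From mathcomp Require Import all_boot.
From Stdlib Require Import Reals.
From mathcomp Require Import all_algebra zify ring.
From Stdlib Require Import Lra Lia.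
From Stdlib Require Znat.

Set Implicit Arguments.
Unset Strict Implicit.
Unset Printing Implicit Defensive.

Import GRing.Theory.

(* The libraries above compete for the keys %N and %R; the statement of
   theorem1p1 reads them as nat_scope and R_scope. *)
Delimit Scope nat_scope with N.
Delimit Scope R_scope with R.

(** * Enumerating partitions *)

Lemma mem_seqs_of_len k (vals s : seq nat) :
  (s \in seqs_of_len k vals) = (size s == k) && all (mem vals) s.
Proof.
elim: k s => [|k IHk] [|x s] //=.
- by apply/negbTE/negP => /allpairsP[? [_ _]].
- apply/allpairsP/idP => [[[y r] /= [Hy Hr [-> ->]]]|/and3P[/eqP[Hs] Hx Hall]].
    by move: Hr; rewrite IHk => /andP[/eqP-> ->]; rewrite Hy eqxx.
  by exists (x, s); rewrite IHk Hs eqxx.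
Qed.

Lemma uniq_seqs_of_len k (vals : seq nat) : uniq vals -> uniq (seqs_of_len k vals).
Proof.
move=> Uvals; elim: k => [|k IHk] //=.
by apply: allpairs_uniq => // -[x1 s1] [x2 s2] _ _ /= [-> ->].
Qed.

Lemma mem_candidates n s :
  (s \in candidates n) = (size s <= n) && all (mem (iota 1 n)) s.
Proof.
apply/flattenP/idP => [[_ /mapP[k Hk ->]]|/andP[Hs Hall]].
  rewrite mem_seqs_of_len => /andP[/eqP-> ->].
  by move: Hk; rewrite mem_iota andbT; lia.
exists (seqs_of_len (size s) (iota 1 n)); last by rewrite mem_seqs_of_len eqxx.
by apply/mapP; exists (size s); rewrite // mem_iota; lia.
Qed.

Lemma uniq_candidates n : uniq (candidates n).
Proof.
have Uiota := iota_uniq 1 n; rewrite /candidates.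
elim: (iota 0 n.+1) (iota_uniq 0 n.+1) => [|k ks IHks] //= /andP[k_ks Uks].
rewrite cat_uniq uniq_seqs_of_len // IHks // andbT.
apply/hasP => -[s /flattenP[_ /mapP[k' k'_ks ->]]].
rewrite !mem_seqs_of_len => /andP[/eqP Hk' _] /andP[/eqP Hk _].
by move: k_ks; rewrite -Hk Hk' k'_ks.
Qed.

Lemma leq_sumn s x : x \in s -> x <= sumn s.
Proof. by elim: s => [|y s IHs] //=; rewrite inE => /orP[/eqP->|/IHs]; lia. Qed.

Lemma size_leq_sumn s : all (fun x => 0 < x) s -> size s <= sumn s.
Proof. by elim: s => [|y s IHs] //= /andP[Hy /IHs]; lia. Qed.

Lemma mem_partitions n s : (s \in partitions n) = is_partition n s.
Proof.
rewrite mem_filter andbC; case Ps: (is_partition n s); last by rewrite andbF.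
move: Ps => /and3P[_ Hpos /eqP<-].
rewrite andbT mem_candidates size_leq_sumn //=.
apply/allP => x Hx; change (x \in iota 1 (sumn s)); rewrite mem_iota.
by move/allP: Hpos => /(_ x Hx); have := leq_sumn Hx; lia.
Qed.

Lemma uniq_partitions n : uniq (partitions n).
Proof. exact/filter_uniq/uniq_candidates. Qed.

(** * Partitions containing prescribed distinct parts *)

Section RemSeq.
Variable T : eqType.

Fixpoint rem_seq (L s : seq T) : seq T :=
  if L is x :: L' then rem_seq L' (rem x s) else s.

Lemma perm_rem_seq L s :
  uniq L -> all (fun x => x \in s) L -> perm_eq s (L ++ rem_seq L s).
Proof.
elim: L s => [|x L IHL] s //= /andP[xL UL] /andP[xs Ls].
apply: perm_trans (perm_to_rem xs) _; rewrite perm_cons IHL //.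
apply/allP => y yL; apply: rem_mem; last by move/allP: Ls; apply.
by apply: contraNneq xL => <-.
Qed.

Lemma rem_seq_subseq L s : subseq (rem_seq L s) s.
Proof.
elim: L s => [|x L IHL] s /=; first exact: subseq_refl.
exact: subseq_trans (IHL _) (rem_subseq _ _).
Qed.

End RemSeq.

Lemma geq_trans : transitive geq. Proof. by move=> ? ? ?; lia. Qed.

Lemma sorted_geq_eq s1 s2 :
  sorted geq s1 -> sorted geq s2 -> perm_eq s1 s2 -> s1 = s2.
Proof.
have geq_anti : antisymmetric geq by move=> ? ?; lia.
exact: (@sorted_eq _ geq geq_trans geq_anti s1 s2).
Qed.

Lemma sort_geq_sorted s : sorted geq (sort geq s).
Proof. by apply: sort_sorted => ? ?; lia. Qed.

Section PartitionsContaining.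
Variables (L : seq nat) (P : pred (seq nat)).
Hypotheses (uniqL : uniq L) (posL : all (fun x => 0 < x) L).
Hypothesis P_perm : forall s1 s2, perm_eq s1 s2 -> P s1 = P s2.

Lemma is_partition_sort_cat n r :
  is_partition n r -> is_partition (sumn L + n) (sort geq (L ++ r)).
Proof.
move=> /and3P[_ posr /eqP<-]; have Hperm := permEl (perm_sort geq (L ++ r)).
rewrite /is_partition sort_geq_sorted (perm_all _ Hperm) all_cat posL posr.
by rewrite (perm_sumn Hperm) sumn_cat eqxx.
Qed.

Lemma is_partition_rem_seq n s : is_partition n s -> all (fun x => x \in s) L ->
  sumn L <= n /\ is_partition (n - sumn L) (rem_seq L s).
Proof.
move=> /and3P[sorted_s pos_s /eqP<-] Ls; have Hperm := perm_rem_seq uniqL Ls.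
have Hsum := perm_sumn Hperm; rewrite sumn_cat in Hsum.
have Hsub := rem_seq_subseq L s.
split; first lia.
rewrite /is_partition (subseq_sorted geq_trans Hsub sorted_s).
have -> : all (fun x => 0 < x) (rem_seq L s).
  by apply/allP => x /(mem_subseq Hsub); apply/allP.
apply/eqP; lia.
Qed.

Lemma count_partitions_containing n :
  count (fun s => all (fun x => x \in s) L && P s) (partitions n)
  = if sumn L <= n then count (fun r => P (L ++ r)) (partitions (n - sumn L))
    else 0.
Proof.
set D := [seq s <- partitions n | all (fun x => x \in s) L && P s].
have memD s : s \in D -> [/\ is_partition n s, all (fun x => x \in s) L & P s].
  by rewrite mem_filter mem_partitions => /andP[/andP[-> ->] ->].
rewrite -size_filter -/D; case: leqP => [LleN|]; last first.
  case: D memD => [|s D'] // /(_ s (mem_head _ _)) [Ps Ls _].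
  by have [] := is_partition_rem_seq Ps Ls; lia.
set E := [seq r <- partitions (n - sumn L) | P (L ++ r)].
have memE r : (r \in E) = P (L ++ r) && is_partition (n - sumn L) r.
  by rewrite mem_filter mem_partitions.
rewrite -size_filter -/E -(size_map (fun r => sort geq (L ++ r))).
apply/perm_size/uniq_perm; first exact/filter_uniq/uniq_partitions.
  rewrite map_inj_in_uniq; first exact/filter_uniq/uniq_partitions.
  move=> r1 r2; rewrite !memE.
  move=> /andP[_ /and3P[r1_sorted _ _]] /andP[_ /and3P[r2_sorted _ _]] Er.
  apply: sorted_geq_eq => //; rewrite -(perm_cat2l L).
  by rewrite -(perm_sort geq (L ++ r1)) Er perm_sort.
move=> s; apply/idP/mapP => [/memD[Ps Ls HPs]|[r]].
  have [_ Pr] := is_partition_rem_seq Ps Ls; have Hperm := perm_rem_seq uniqL Ls.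
  exists (rem_seq L s); first by rewrite memE Pr andbT -(P_perm Hperm).
  apply: sorted_geq_eq; first by case/and3P: Ps.
    exact: sort_geq_sorted.
  by rewrite perm_sym perm_sort perm_sym.
rewrite memE => /andP[HPr Pr] ->.
have Hperm := permEl (perm_sort geq (L ++ r)).
rewrite mem_filter mem_partitions (P_perm Hperm) HPr andbT.
have := is_partition_sort_cat Pr; rewrite subnKC // => ->; rewrite andbT.
by apply/allP => x xL; rewrite (perm_mem Hperm) mem_cat xL.
Qed.

End PartitionsContaining.

Lemma count_split (T : Type) (a b : pred T) s :
  count a s = count (predI b a) s + count (predI (predC b) a) s.
Proof. by rewrite -size_filter -(count_predC b) !count_filter. Qed.

Definition p_bounded k n := count (fun s => all (fun x => x <= k) s) (partitions n).

Lemma p_bounded0 n : p_bounded 0 n = (n == 0).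
Proof.
rewrite /p_bounded (eq_in_count (a2 := pred1 [::])).
  by rewrite count_uniq_mem ?uniq_partitions // mem_partitions; case: n.
move=> [|x s] //; rewrite mem_partitions => /and3P[_ /= /andP[x_gt0 _] _].
by rewrite leqn0 (gtn_eqF x_gt0).
Qed.

Lemma p_bounded_id k n : n <= k -> p_bounded k n = size (partitions n).
Proof.
move=> le_nk; rewrite /p_bounded -count_predT; apply: eq_in_count => s.
rewrite mem_partitions => /and3P[_ _ /eqP sum_s] /=.
by apply/allP => x /leq_sumn; lia.
Qed.

Lemma all_leqS_notin k (s : seq nat) :
  all (fun x => x <= k.+1) s && (k.+1 \notin s) = all (fun x => x <= k) s.
Proof.
elim: s => //= x s <-; rewrite in_cons negb_or [k.+1 == x]eq_sym.
have -> : (x <= k) = (x != k.+1) && (x <= k.+1) by rewrite -ltn_neqAle.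
by case: (x != k.+1); case: (x <= k.+1); case: (k.+1 \in s); case: (all _ s).
Qed.

Lemma p_boundedS k n :
  p_bounded k.+1 n = p_bounded k n + (if k.+1 <= n then p_bounded k.+1 (n - k.+1) else 0).
Proof.
rewrite /p_bounded (count_split _ (fun s => k.+1 \in s)).
rewrite addnC; congr (_ + _).
  by apply: eq_count => s; rewrite /= andbC all_leqS_notin.
have := count_partitions_containing (P := fun s => all (fun x => x <= k.+1) s)
  (isT : uniq [:: k.+1]) isT (fun s1 s2 => @perm_all _ s1 s2 _) n.
rewrite /= addn0 ltnSn => <-; apply: eq_count => s /=.
by rewrite andbT.
Qed.

(** * The mex as the length of a run *)

Lemma sum_nat_of_bool (P : pred nat) K : \sum_(j < K) (P j : nat) = count P (iota 0 K).
Proof.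
elim: K => [|K IHK]; first by rewrite big_ord0.
have -> : iota 0 K.+1 = iota 0 K ++ [:: K] by rewrite -addn1 iotaD.
by rewrite big_ord_recr IHK count_cat /= addn0.
Qed.

Lemma count_iota_ltn J K : J <= K -> count (fun j => j < J) (iota 0 K) = J.
Proof.
move=> le_JK; have := filter_iota_ltn 0 le_JK; rewrite add0n => filterE.
by rewrite -size_filter filterE size_iota.
Qed.

(* Each s is counted (f s).+1 times on the right. *)
Lemma odd_count_even (T : Type) (f : T -> nat) K (l : seq T) :
  all (fun s => f s < K) l ->
  odd (count (fun s => ~~ odd (f s)) l) = odd (\sum_(j < K) count (fun s => j <= f s) l).
Proof.
elim: l => [|s l IHl] /=; first by rewrite big1.
move=> /andP[fsK lK]; rewrite big_split /= oddD IHl // (sum_nat_of_bool (fun j => j <= f s)).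
by rewrite (count_iota_ltn fsK) /= oddD; case: (odd (f s)); rewrite /= ?negbK.
Qed.

Definition aprog A a j := [seq a + i * A | i <- iota 0 j].

Definition aprog_sum A a j := sumn (aprog A a j).

Lemma aprog_sumS A a j : aprog_sum A a j.+1 = aprog_sum A a j + (a + j * A).
Proof. by rewrite /aprog_sum /aprog -addn1 iotaD map_cat sumn_cat /= addn0. Qed.

Lemma aprog_sum_inj A a : 0 < a -> injective (aprog_sum A a).
Proof.
move=> a_gt0; have step j : aprog_sum A a j < aprog_sum A a j.+1.
  by rewrite aprog_sumS; lia.
exact: incn_inj (leq_mono (homo_ltn ltn_trans step)).
Qed.

(* Indices j <= N suffice, as aprog_sum A a j >= j when a > 0. *)
Definition is_aprog_sum A a N := N \in [seq aprog_sum A a j | j <- iota 0 N.+1].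

(* The search range suffices: a + (sumn s).+1 * A exceeds every part of s. *)
Definition run_len A a (s : seq nat) := find (fun i => a + i * A \notin s) (iota 0 (sumn s).+2).

Section RunLength.
Variables (A a : nat) (s : seq nat).
Hypothesis A_gt0 : 0 < A.

Let has_gap : has (fun i => a + i * A \notin s) (iota 0 (sumn s).+2).
Proof.
apply/hasP; exists (sumn s).+1; first by rewrite mem_iota; lia.
by apply/negP => /leq_sumn; nia.
Qed.

Let run_len_lt : run_len A a s < (sumn s).+2.
Proof. by have := has_gap; rewrite has_find size_iota. Qed.

Lemma run_len_notin : a + run_len A a s * A \notin s.
Proof. by have := nth_find 0 has_gap; rewrite nth_iota. Qed.

Lemma mem_before_run_len i : i < run_len A a s -> a + i * A \in s.
Proof.
move=> lt_i_run; have := before_find 0 lt_i_run.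
by rewrite nth_iota => [/negbFE|]; last exact: ltn_trans lt_i_run run_len_lt.
Qed.

Lemma run_len_leq_sumn : 0 < a -> run_len A a s <= sumn s.
Proof.
case E: (run_len A a s) => [//|j] a_gt0.
have lt_j_run : j < run_len A a s by rewrite E.
by have := leq_sumn (mem_before_run_len lt_j_run); nia.
Qed.

Lemma aprog_subset j : all (fun x => x \in s) (aprog A a j) = (j <= run_len A a s).
Proof.
apply/allP/idP => [sub_s|le_j_run x /mapP[i]].
  rewrite leqNgt; apply: contraNN run_len_notin => lt_run_j.
  by apply/sub_s/mapP; exists (run_len A a s); rewrite // mem_iota.
by rewrite mem_iota => /andP[_ lt_ij] ->; apply: mem_before_run_len; lia.
Qed.

End RunLength.

Lemma count_partitions_aprog A a j n : 0 < A -> 0 < a ->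
  count (fun s => j <= run_len A a s) (partitions n)
  = if aprog_sum A a j <= n then size (partitions (n - aprog_sum A a j)) else 0.
Proof.
move=> A_gt0 a_gt0.
have uniq_aprog : uniq (aprog A a j).
  by rewrite map_inj_uniq ?iota_uniq // => x y /addnI /eqP; rewrite eqn_pmul2r // => /eqP.
have pos_aprog : all (fun x => 0 < x) (aprog A a j).
  by apply/allP => _ /mapP[i _ ->]; rewrite addn_gt0 a_gt0.
rewrite -(@eq_count _ (fun s => all (fun x => x \in s) (aprog A a j) && predT s)).
  rewrite count_partitions_containing //; case: ifP => // _; exact: count_predT.
by move=> s; rewrite andbT aprog_subset.
Qed.

Section Mex.
Variables A a : nat.
Hypotheses (a_gt0 : 0 < a) (a_leqA : a <= A).

Let A_gt0 : 0 < A. Proof. exact: leq_trans a_gt0 a_leqA. Qed.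

Lemma eq_mod_aprog k : 0 < k -> k = a %[mod A] -> exists i, k = a + i * A.
Proof.
move=> k_gt0 k_mod; have k_div := divn_eq k A; rewrite k_mod in k_div.
have [lt_aA|le_Aa] := ltnP a A.
  by exists (k %/ A); rewrite {1}k_div modn_small // addnC.
have eq_aA : a = A by apply/eqP; rewrite eqn_leq a_leqA le_Aa.
rewrite eq_aA modnn addn0 in k_div; exists (k %/ A).-1; rewrite eq_aA.
by move: k_gt0; rewrite {1 2}k_div; case: (k %/ A) => [|q] /=; nia.
Qed.

Lemma aprog_mod i : a + i * A = a %[mod A].
Proof. by rewrite -modnDmr modnMl addn0. Qed.

Lemma is_mexE s k : is_mex A a s k = (k == a + run_len A a s * A).
Proof.
apply/idP/eqP => [/and4P[k_gt0 /eqP k_mod k_notin /allP k_min]|->].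
  have [i k_eq] := eq_mod_aprog k_gt0 k_mod; subst k; congr (_ + _ * _).
  case: (ltngtP i (run_len A a s)) => [lt_i_run|lt_run_i|//].
    by rewrite mem_before_run_len in k_notin.
  suff /k_min : a + run_len A a s * A \in iota 1 (a + i * A).-1.
    by rewrite aprog_mod eqxx (negbTE (run_len_notin _ _ A_gt0)).
  by rewrite mem_iota; nia.
apply/and4P; split; [lia | exact/eqP/aprog_mod | exact: run_len_notin |].
apply/allP => x; rewrite mem_iota => /andP[x_gt0 lt_x]; apply/implyP => /eqP x_mod.
have [i x_eq] := eq_mod_aprog x_gt0 x_mod; rewrite x_eq.
by apply: mem_before_run_len; nia.
Qed.

Lemma mex_condE s : mex_cond A a s = ~~ odd (run_len A a s).
Proof.
have mod2A i : (a + i * A == a %[mod 2 * A]) = ~~ odd i.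
  by rewrite -[X in _ == X %[mod _]]addn0 eqn_modDl mod0n -dvdn2 -(dvdn_pmul2r A_gt0).
rewrite /mex_cond (eq_has (a2 := fun k => (k == a + run_len A a s * A) && (k == a %[mod 2 * A]))).
  apply/hasP/idP => [[k _ /andP[/eqP-> ]]|even_run]; first by rewrite mod2A.
  exists (a + run_len A a s * A); last by rewrite eqxx mod2A.
  by rewrite mem_iota; have := run_len_leq_sumn s A_gt0 a_gt0; nia.
by move=> k; rewrite /= is_mexE.
Qed.

End Mex.

Lemma odd_p_mex A a n K : 0 < a <= A -> n < K ->
  odd (p_mex A a n) = odd (\sum_(j < K)
    if aprog_sum A a j <= n then size (partitions (n - aprog_sum A a j)) else 0).
Proof.
move=> /andP[a_gt0 a_leqA] lt_nK; have A_gt0 := leq_trans a_gt0 a_leqA.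
rewrite /p_mex (eq_count (mex_condE a_gt0 a_leqA)) (@odd_count_even _ _ K).
  by congr odd; apply: eq_bigr => j _; rewrite count_partitions_aprog.
apply/allP => s; rewrite mem_partitions => /and3P[_ _ /eqP sum_s].
by have := run_len_leq_sumn s A_gt0 a_gt0; lia.
Qed.

(** * Euler's pentagonal number theorem *)

Fixpoint tri k := if k is k'.+1 then tri k' + k else 0.

(* The generalized pentagonal numbers j(3j-1)/2 and j(3j+1)/2. *)
Definition pent j := j * j + tri j.-1.

Definition pent_neg j := j * j + tri j.

Definition pent_upto n := [seq pent j | j <- iota 0 n.+1] ++ [seq pent_neg j | j <- iota 1 n].

Lemma mul2_tri j : 2 * tri j = j * j.+1.
Proof. by elim: j => //= j IHj; rewrite mulnDr IHj; nia. Qed.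

Lemma pent_leq_pent_neg j : pent j <= pent_neg j.
Proof. by case: j => //= j; rewrite /pent /pent_neg /=; lia. Qed.

Lemma pentS j : pent j.+1 = pent_neg j + j.*2.+1.
Proof. by rewrite /pent /pent_neg /=; nia. Qed.

Lemma pent_homo : {homo pent : i j / i <= j}.
Proof.
apply: homo_leq leqnn leq_trans _ => j.
by rewrite pentS; apply: leq_trans (pent_leq_pent_neg j) (leq_addr _ _).
Qed.

Lemma pent_neg_homo : {homo pent_neg : i j / i <= j}.
Proof.
apply: homo_leq leqnn leq_trans _ => j.
by apply: leq_trans (pent_leq_pent_neg j.+1); rewrite pentS leq_addr.
Qed.

Section Shanks.
Variable R : comNzRingType.
Local Open Scope ring_scope.

Definition euler_poly n : {poly R} := \prod_(1 <= i < n.+1) (1 - 'X^i).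

Definition pent_poly n : {poly R} :=
  \sum_(j < n.+1) (-1) ^+ j * 'X^(pent j) + \sum_(j < n) (-1) ^+ j.+1 * 'X^(pent_neg j.+1).

Definition shanks_term n k : {poly R} :=
  (-1) ^+ k * \prod_(k.+1 <= i < n.+1) (1 - 'X^i) * 'X^(n * k + tri k).

Let shanks_defect n k : {poly R} :=
  (-1) ^+ k.+1 * 'X^(n * k + tri k) * \prod_(k <= i < n.+1) (1 - 'X^i).

Let shanks_termS n k : (k <= n)%N ->
  shanks_term n.+1 k = shanks_term n k + (shanks_defect n k - shanks_defect n k.+1).
Proof.
move=> le_kn; rewrite /shanks_term /shanks_defect big_nat_recr /=; last by lia.
rewrite (big_ltn (m := k)); last by lia.
have -> : (n.+1 * k + tri k = n * k + tri k + k)%N by lia.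
have -> : (n * k.+1 + tri k.+1 = n * k + tri k + k + n.+1)%N by rewrite /=; lia.
rewrite !exprD !exprS; ring.
Qed.

Lemma shanks_identity n : \sum_(k < n.+1) shanks_term n k = pent_poly n.
Proof.
elim: n => [|n IHn].
  by rewrite /pent_poly !big_ord1 big_ord0 /shanks_term big_geq // !mulr1 addr0.
rewrite big_ord_recr /=.
rewrite (eq_bigr (fun k : 'I_n.+1 => shanks_term n k +
    (shanks_defect n k - shanks_defect n k.+1))); last first.
  by move=> k _; apply: shanks_termS; rewrite -ltnS.
rewrite big_split /= IHn.
rewrite -(big_mkord xpredT (fun k => shanks_defect n k - shanks_defect n k.+1)).
rewrite (telescope_sumr_eq (fun k => - shanks_defect n k)) // => [|k _]; last first.
  by rewrite opprK addrC.
have -> : shanks_defect n 0 = 0 by rewrite /shanks_defect big_ltn // subrr !mul0r mulr0.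
rewrite /pent_poly [in RHS]big_ord_recr [X in _ = _ + X]big_ord_recr /=.
rewrite /shanks_defect /shanks_term !big_geq // !mulr1.
have -> : (n * n.+1 + tri n.+1 = pent n.+1)%N by rewrite /pent /=; lia.
rewrite !exprS; ring.
Qed.

Lemma euler_poly_trunc n : take_poly n.+1 (euler_poly n) = take_poly n.+1 (pent_poly n).
Proof.
rewrite -shanks_identity big_ord_recl take_polyD take_poly_sum big1 ?addr0.
  by rewrite /shanks_term /euler_poly /= muln0 !expr0 mul1r mulr1.
move=> k _; rewrite take_polyMXn lift0.
have -> : (n.+1 - (n * k.+1 + tri k.+1) = 0)%N by rewrite /=; nia.
by rewrite take_poly0l mul0r.
Qed.

End Shanks.

Section Truncation.
Variable R : nzRingType.
Local Open Scope ring_scope.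

Lemma take_polyMl n (p q : {poly R}) :
  take_poly n (take_poly n p * q) = take_poly n (p * q).
Proof.
rewrite -[in RHS](poly_take_drop n p) mulrDl take_polyD -mulrA.
by rewrite -(commr_polyXn q) mulrA take_polyMXn_0 addr0.
Qed.

Lemma take_polyMr n (p q : {poly R}) :
  take_poly n (p * take_poly n q) = take_poly n (p * q).
Proof.
by rewrite -[in RHS](poly_take_drop n q) mulrDr take_polyD mulrA take_polyMXn_0 addr0.
Qed.

End Truncation.

Section PartitionGF.
Variable R : comNzRingType.
Local Open Scope ring_scope.

Definition part_gf k L : {poly R} := \poly_(i < L) (p_bounded k i)%:R.

Lemma part_gfS k L : take_poly L (part_gf k.+1 L * (1 - 'X^(k.+1))) = part_gf k L.
Proof.
apply/polyP => i; rewrite coef_take_poly mulrBr mulr1 coefB coefMXn !coef_poly.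
case: (ltnP i L) => [lt_iL|]; last by [].
rewrite p_boundedS; case: (ltnP i k.+1) => [lt_ik|le_ki]; first by rewrite addn0 subr0.
by rewrite ifT ?natrD ?addrK //; lia.
Qed.

Lemma part_gf_euler k L : take_poly L (part_gf k L * euler_poly R k) = take_poly L 1.
Proof.
elim: k => [|k IHk].
  rewrite /euler_poly big_geq // mulr1; apply/polyP => i.
  by rewrite !coef_take_poly coef_poly coef1 p_bounded0; case: ltnP.
rewrite /euler_poly big_nat_recr //= -/(euler_poly R k) mulrA mulrC mulrA.
by rewrite -take_polyMl [(1 - _) * _]mulrC part_gfS.
Qed.

End PartitionGF.

(** * The pentagonal recurrence modulo 2 *)

Section PentagonalRecurrence.
Local Open Scope ring_scope.

Lemma natr_F2 n : n%:R = (odd n)%:R :> 'F_2.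
Proof. by rewrite -modn2 (Fp_nat_mod (isT : prime 2)). Qed.

Lemma natr_F2_inj : injective (fun b : bool => b%:R : 'F_2).
Proof. by move=> [] [] // /eqP; rewrite ?oner_eq0 // eq_sym oner_eq0. Qed.

Lemma pent_poly_F2 n : pent_poly 'F_2 n = \sum_(g <- pent_upto n) 'X^g.
Proof.
have sum_iota (F : nat -> {poly 'F_2}) m k :
    \sum_(j <- iota m k) F j = \sum_(j < k) F (m + j)%N.
  rewrite (_ : iota m k = index_iota (0 + m) (m + k)); last by rewrite /index_iota addKn.
  by rewrite big_addn addKn big_mkord; apply: eq_bigr => j _; rewrite addnC.
have minus1 : (-1 : {poly 'F_2}) = 1 by rewrite -polyCN; congr polyC; apply/eqP.
rewrite /pent_poly /pent_upto big_cat !big_map !sum_iota minus1.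
by congr (_ + _); apply: eq_bigr => j _; rewrite expr1n mul1r.
Qed.

Variables (A a N : nat).
Hypothesis aP : (0 < a <= A)%N.

(* Mod 2, R is S times the partition series, which Euler's product inverts;
   hence R * pent_poly agrees with S up to degree N. *)
Let L := N.+1.
Let R : {poly 'F_2} := \poly_(i < L) (p_mex A a i)%:R.
Let S : {poly 'F_2} := \sum_(j < L) 'X^(aprog_sum A a j).

Let R_trunc : take_poly L R = take_poly L (S * part_gf 'F_2 N L).
Proof.
apply/polyP => i; rewrite !coef_take_poly; case: ifP => // lt_iL.
rewrite coef_poly lt_iL natr_F2 (@odd_p_mex A a i L) // -natr_F2 natr_sum.
rewrite mulr_suml coef_sum; apply: eq_bigr => j _.
rewrite coefXnM coef_poly ltnNge; case: (leqP (aprog_sum A a j) i) => //= le_ei.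
by rewrite ifT ?p_bounded_id //; lia.
Qed.

Let RP_trunc : take_poly L (R * pent_poly 'F_2 N) = take_poly L S.
Proof.
rewrite -take_polyMr -euler_poly_trunc take_polyMr -take_polyMl R_trunc.
by rewrite take_polyMl -mulrA -take_polyMr part_gf_euler take_polyMr mulr1.
Qed.

Lemma pentagonal_recurrence_mod2 :
  odd (\sum_(g <- pent_upto N | (g <= N)%N) p_mex A a (N - g))
  = is_aprog_sum A a N.
Proof.
apply: natr_F2_inj; rewrite /= -natr_F2 natr_sum.
transitivity ((R * pent_poly 'F_2 N)`_N).
  rewrite pent_poly_F2 mulr_sumr coef_sum big_mkcond; apply: eq_bigr => g _.
  rewrite coefMXn coef_poly ltnNge; case: (leqP g N) => //= le_gN.
  by rewrite ifT // /L ltnS leq_subr.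
have := congr1 (fun p : {poly 'F_2} => p`_N) RP_trunc; rewrite /= !coef_take_poly ltnSn => ->.
rewrite coef_sum (eq_bigr (fun j : 'I_L => ((N == aprog_sum A a j) : nat)%:R)); last first.
  by move=> j _; rewrite coefXn.
rewrite -natr_sum (sum_nat_of_bool (fun j => N == aprog_sum A a j)).
have uniq_sums : uniq [seq aprog_sum A a j | j <- iota 0 L].
  by rewrite (map_inj_uniq (aprog_sum_inj (andP aP).1)) iota_uniq.
rewrite /is_aprog_sum -(count_uniq_mem _ uniq_sums) count_map.
by congr _%:R; apply: eq_count => j; rewrite /= eq_sym.
Qed.

End PentagonalRecurrence.

(** * Counting even values *)

Lemma odd_sum (I : Type) (r : seq I) (P : pred I) (F : I -> nat) :
  odd (\sum_(i <- r | P i) F i) = odd (count (fun i => P i && odd (F i)) r).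
Proof.
elim: r => [|i r IHr]; first by rewrite big_nil.
by rewrite big_cons /=; case: (P i); rewrite /= ?oddD ?oddb IHr.
Qed.

Lemma odd_p_mex0 A a : 0 < a <= A -> odd (p_mex A a 0).
Proof. by move=> aP; rewrite (@odd_p_mex A a 0 1) // big_ord1. Qed.

Definition npent N := count (fun g => g <= N) (pent_upto N).

Lemma exists_even_shift A a N : 0 < a <= A -> odd (npent N) ->
  ~~ is_aprog_sum A a N ->
  exists2 g, g \in pent_upto N & g < N /\ ~~ odd (p_mex A a (N - g)).
Proof.
move=> aP odd_npent notin_sums.
suff /hasP[g g_pent /andP[lt_gN even_p]] :
  has (fun g => (g < N) && ~~ odd (p_mex A a (N - g))) (pent_upto N) by exists g.
apply: contraNT notin_sums => /hasPn no_shift.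
rewrite -pentagonal_recurrence_mod2 // odd_sum.
suff -> : count (fun g => (g <= N) && odd (p_mex A a (N - g))) (pent_upto N) = npent N by [].
apply: eq_in_count => g /no_shift; rewrite negb_and negbK.
case: ltngtP => [_ /= -> //|//|-> _]; by rewrite subnn odd_p_mex0.
Qed.

Lemma npent_odd j N : pent_neg j <= N < pent j.+1 -> odd (npent N).
Proof.
move=> /andP[le_jN lt_Nj]; have le_j_pent_neg : j <= pent_neg j by rewrite /pent_neg; nia.
rewrite /npent count_cat !count_map.
rewrite (eq_in_count (a2 := fun i => i < j.+1)) ?count_iota_ltn; first last.
- move=> i _ /=; rewrite ltnS; apply/idP/idP => [le_iN|le_ij]; last first.
    exact: leq_trans (pent_homo le_ij) (leq_trans (pent_leq_pent_neg j) le_jN).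
  by rewrite leqNgt; apply/negP => /pent_homo; lia.
- lia.
rewrite (eq_in_count (a2 := fun i => i < j.+1)); last first.
  move=> i _ /=; rewrite ltnS; apply/idP/idP => [le_iN|le_ij]; last exact: leq_trans (pent_neg_homo le_ij) le_jN.
  rewrite leqNgt; apply/negP => /pent_neg_homo; have := pent_leq_pent_neg j.+1; lia.
rewrite -[1]addn0 iotaDl count_map (eq_count (a2 := fun i => i < j)) // count_iota_ltn.
  by rewrite addSn /= oddD; case: (odd j).
lia.
Qed.

Lemma count_odd_npent J :
  J.+1 * J.+1 <= count (fun N => odd (npent N)) (iota 0 (pent J.+1)).
Proof.
elim: J => [//|J IHJ].
have le_pent := pent_leq_pent_neg J.+1; have pentSJ := pentS J.+1.
have all_odd : count (fun N => odd (npent N)) (iota (pent_neg J.+1) (pent J.+2 - pent_neg J.+1))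
    = pent J.+2 - pent_neg J.+1.
  rewrite -[RHS](size_iota (pent_neg J.+1)) -count_predT; apply: eq_in_count => N.
  by rewrite mem_iota => /andP[? ?]; apply: (@npent_odd J.+1); lia.
rewrite (_ : pent J.+2 = pent J.+1 + (pent_neg J.+1 - pent J.+1) + (pent J.+2 - pent_neg J.+1));
  last by lia.
rewrite iotaD iotaD !count_cat !add0n (_ : pent J.+1 + (pent_neg J.+1 - pent J.+1) = pent_neg J.+1);
  last by lia.
by rewrite all_odd; nia.
Qed.

Lemma size_pent_upto i : size (pent_upto i) = i.*2.+1.
Proof. by rewrite size_cat !size_map !size_iota; lia. Qed.

Lemma pent_upto_sub N i g : g \in pent_upto N -> g < i.+1 * i.+1 -> g \in pent_upto i.
Proof.
rewrite !mem_cat => /orP[] /mapP[j]; rewrite mem_iota => /andP[j_ge _] -> lt_g_sq.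
  have: j * j <= pent j by apply: leq_addr.
  by move=> ?; apply/orP; left; apply/mapP; exists j; rewrite // mem_iota; nia.
have: j * j <= pent_neg j by apply: leq_addr.
by move=> ?; apply/orP; right; apply/mapP; exists j; rewrite // mem_iota; nia.
Qed.

Lemma tri_leq_aprog_sum A a j : 0 < a -> 0 < A -> tri j <= aprog_sum A a j.
Proof. by move=> a_gt0 A_gt0; elim: j => //= j IHj; rewrite aprog_sumS; nia. Qed.

Lemma count_aprog_sums A a x i : 0 < a -> 0 < A -> x < i.+1 * i.+1 ->
  count (is_aprog_sum A a) (iota 0 x.+1) <= i.*2.+2.
Proof.
move=> a_gt0 A_gt0 lt_x_sq; rewrite -size_filter.
rewrite -[X in _ <= X](size_iota 0 i.*2.+2) -[X in _ <= X](size_map (aprog_sum A a)).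
apply: uniq_leq_size; first by apply: filter_uniq; apply: iota_uniq.
move=> N; rewrite mem_filter mem_iota => /andP[/mapP[j _ ->] le_e_x].
apply/mapP; exists j => //; rewrite mem_iota.
by have := tri_leq_aprog_sum j a_gt0 A_gt0; have := mul2_tri j; nia.
Qed.

Lemma count_shifted_evens A a x i : 0 < a <= A -> x < i.+1 * i.+1 ->
  count (fun N => odd (npent N) && ~~ is_aprog_sum A a N) (iota 0 x.+1)
  <= count (fun n => ~~ odd (p_mex A a n)) (iota 1 x) * i.*2.+1.
Proof.
move=> aP lt_x_sq; rewrite -size_filter -size_filter -(size_pent_upto i).
rewrite -(size_allpairs addn); apply: uniq_leq_size.
  by apply: filter_uniq; apply: iota_uniq.
move=> N; rewrite mem_filter mem_iota => /andP[/andP[odd_N notin_N] le_Nx].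
have [g g_pent [lt_gN even_p]] := exists_even_shift aP odd_N notin_N.
apply/allpairsP; exists (N - g, g); split => /=; last by rewrite subnK // ltnW.
  by rewrite mem_filter even_p mem_iota; lia.
by apply: pent_upto_sub g_pent _; lia.
Qed.

Lemma quadratic_count_bound i J B : 64 <= i -> i <= J.*2.+1 ->
  J.+1 * J.+1 <= B * i.*2.+1 + i.*2.+2 -> i <= 24 * B.
Proof.
move=> i_ge64 J_bound sq_le; rewrite leqNgt; apply/negP => lt_B.
have sq_J : i.+1 * i.+1 <= 4 * (J.+1 * J.+1) by nia.
have B_i : 24 * (B * i.*2.+1) <= i.-1 * i.*2.+1 by rewrite mulnA; apply: leq_mul; lia.
have sq_i : 64 * i <= i * i by apply: leq_mul.
nia.
Qed.

Lemma even_count_lower_bound A a x i : 0 < a <= A -> i * i <= x < i.+1 * i.+1 -> 64 <= i ->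
  i <= 24 * count (fun n => ~~ odd (p_mex A a n)) (iota 1 x).
Proof.
move=> aP /andP[le_sq_x lt_x_sq] i_ge64; have /andP[a_gt0 a_leqA] := aP.
set B := count _ _.
pose J := i./2; have J_bound : i <= J.*2.+1 by rewrite /J; lia.
have odd_J : J.+1 * J.+1 <= count (fun N => odd (npent N)) (iota 0 x.+1).
  have le_pent_x : pent J.+1 <= x.+1.
    by rewrite /pent /=; have := mul2_tri J; rewrite /J in J_bound *; nia.
  rewrite -(subnKC le_pent_x) iotaD count_cat; apply: leq_trans (count_odd_npent J) _.
  exact: leq_addr.
have cover : count (fun N => odd (npent N)) (iota 0 x.+1)
    <= count (fun N => odd (npent N) && ~~ is_aprog_sum A a N) (iota 0 x.+1)
       + count (is_aprog_sum A a) (iota 0 x.+1).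
  rewrite -count_predUI; apply: leq_trans (leq_addr _ _); apply: sub_count => N odd_N.
  by apply/orP; case: (boolP (is_aprog_sum A a N)) => [|not_hit]; [right | left; apply/andP].
have := count_shifted_evens aP lt_x_sq.
have := count_aprog_sums a_gt0 (leq_trans a_gt0 a_leqA) lt_x_sq.
rewrite -/B => le_hit le_bad.
by apply: quadratic_count_bound i_ge64 J_bound _; lia.
Qed.

Section RealBound.
Local Open Scope R_scope.

Lemma Int_part_to_nat X : 0 <= X ->
  INR (Z.to_nat (Int_part X)) <= X < INR (Z.to_nat (Int_part X)) + 1.
Proof.
move=> X_ge0; have [le_IX lt_XI] := base_Int_part X.
have Ip_ge0 : Z.le 0 (Int_part X).
  have : Z.lt (-1) (Int_part X) by apply: lt_IZR; lra.
  lia.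
by rewrite INR_IZR_INZ Znat.Z2Nat.id //; lra.
Qed.

Lemma sqrt_third_leq (X : R) x i : X < INR x + 1 -> (x < i.+1 * i.+1)%N -> (2 <= i)%N ->
  sqrt (X / 3) <= INR i.
Proof.
move=> lt_X lt_x_sq i_ge2.
have i_ge2R : 2 <= INR i by apply: (le_INR 2); apply/leP.
have le_x_sq : INR x + 1 <= (INR i + 1) * (INR i + 1).
  by rewrite -!S_INR -mult_INR; apply/le_INR/leP.
rewrite -(sqrt_square (INR i)); last by lra.
by apply: sqrt_le_1_alt; nra.
Qed.

Lemma even_count_sqrt_bound A a X : (0 < a <= A)%N -> 4096 <= X ->
  sqrt (X / 3) <= 24 * INR (even_count A a X).
Proof.
move=> aP X_ge; have [le_xX lt_Xx] := Int_part_to_nat (ltac:(lra) : 0 <= X).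
rewrite /even_count; set x := Z.to_nat (Int_part X) in le_xX lt_Xx *.
have [/leP sq_le /leP sq_gt] := Nat.sqrt_spec x (le_0_n x); set i := Nat.sqrt x in sq_le sq_gt.
have i_ge64 : (64 <= i)%N.
  have x_ge : (4096 <= x)%N.
    apply/leP; suff : Z.lt 4095 (Z.of_nat x) by lia.
    by apply: lt_IZR; rewrite -INR_IZR_INZ; lra.
  rewrite leqNgt; apply/negP => lt_i.
  have : (i.+1 * i.+1 <= 64 * 64)%N by apply: leq_mul.
  lia.
have := even_count_lower_bound aP (introT andP (conj sq_le sq_gt)) i_ge64.
move=> /leP/le_INR; rewrite mult_INR (_ : INR 24 = 24); last by rewrite INR_IZR_INZ.
by have := sqrt_third_leq lt_Xx sq_gt (leq_trans (isT : 2 <= 64)%N i_ge64); lra.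
Qed.

End RealBound.

Theorem theorem1p1 (t m : nat) (ht : (0 < t)%N) (hm : (0 < m)%N) :
  exists c : R, (0 < c)%R /\
  exists X0 : R, forall X : R, (X0 <= X)%R ->
    (c * sqrt (X / 3) <= INR (even_count (m * t) t X))%R.
Proof.
exists (1 / 24)%R; split; first lra.
exists 4096%R => X X_ge.
have tP : (0 < t <= m * t)%N by rewrite ht leq_pmull.
by have := even_count_sqrt_bound tP X_ge; lra.
Qed.
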